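(* Let $d,N\ge 1$ be integers, let $\mathbb{K},\mathbb{M}$ be real skew-symmetric $d\times d$ matrices, let $S:\mathbb{R}^d\to\mathbb{R}$ be smooth, and let $\mathcal{D}_h$ be a real skew-symmetric $N\times N$ matrix; put $\mathcal{C}_h=\mathcal{D}_h\otimes\mathbb{I}_d$. Let $z_h(t)\in\mathbb{R}^{dN}$ be a differentiable solution of $$(\mathbb{I}_N\otimes\mathbb{K})\,\frac{dz_h}{dt}(t)+(\mathcal{D}_h\otimes\mathbb{M})\,z_h(t)=\nabla\widetilde S_h\big(z_h(t)\big),$$ where $\widetilde S_h(z)=\sum_{j=0}^{N-1}S(z_j)$ for $z=(z_0,\dots,z_{N-1})$, $z_j\in\mathbb{R}^d$. Define $$\mathcal{I}_h(t)=\tfrac12\, z_h(t)^{\top}(\mathcal{D}_h\otimes\mathbb{K})\,z_h(t),\qquad \mathfrak{M}_h(t)=\widetilde S_h\big(z_h(t)\big)-\tfrac12\, z_h(t)^{\top}(\mathbb{I}_N\otimes\mathbb{K})\,\frac{dz_h}{dt}(t).$$ Then $$\frac{d\mathcal{I}_h}{dt}+\nabla_h\mathfrak{M}_h=0,$$ where $\nabla_h$ is the discrete spatial derivative described in the context.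
   Context: $\otimes$ is the Kronecker product, $\mathbb{I}_n$ the $n\times n$ identity. The discrete gradient is defined for smooth $Q:\mathbb{R}^{dN}\to\mathbb{R}$ by $\nabla_h Q(z)=\nabla Q(z)^{\top}\mathcal{C}_h z$ (chain rule with $\partial_x$ of the state replaced by $\mathcal{C}_h z$); for a quantity also involving $\dot z=dz_h/dt$, each occurrence of the state (including in $\dot z$) is differentiated this way, so explicitly $\nabla_h\mathfrak{M}_h=\nabla\widetilde S_h(z_h)^{\top}\mathcal{C}_h z_h-\tfrac12(\mathcal{C}_h z_h)^{\top}(\mathbb{I}_N\otimes\mathbb{K})\dot z_h-\tfrac12 z_h^{\top}(\mathbb{I}_N\otimes\mathbb{K})\,\mathcal{C}_h\dot z_h$. *)

From HB Require Import structures.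
From mathcomp Require Import all_boot all_order all_algebra.
From mathcomp Require Import all_classical all_reals all_analysis.
From mathcomp Require Export mxtens.
Set Implicit Arguments.
Unset Strict Implicit.
Unset Printing Implicit Defensive.
Import Order.TTheory GRing.Theory Num.Theory.
Import numFieldNormedType.Exports.
Local Open Scope ring_scope.

(* Vectors of R^n are column vectors 'cV[R]_n.  The Kronecker product is
   mathcomp's [tensmx] (notation A *t B), with the standard row-major
   index convention (i,k) |-> i * p + k  (mxtens_index). *)

Definition basis_vec {R : realType} {n : nat} (i : 'I_n) : 'cV[R]_n :=
  delta_mx i 0.

Definition grad {R : realType} {n : nat} (f : 'cV[R]_n -> R) (x : 'cV[R]_n)
  : 'cV[R]_n := \col_(i < n) ('D_(basis_vec i) f x).

Definition iter_dir {R : realType} {n : nat} (vs : seq 'cV[R]_n)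
  (f : 'cV[R]_n -> R) : 'cV[R]_n -> R :=
  foldr (fun v g => fun x => 'D_v g x) f vs.

Definition smooth {R : realType} {n : nat} (f : 'cV[R]_n -> R) : Prop :=
  forall vs : seq 'cV[R]_n,
    continuous (iter_dir vs f) /\
    (forall (x v : 'cV[R]_n), derivable (iter_dir vs f) x v).

Definition block {R : realType} {N d : nat} (z : 'cV[R]_(N * d)) (j : 'I_N)
  : 'cV[R]_d := \col_(k < d) z (mxtens_index (j, k)) 0.

Definition Stilde {R : realType} {N d : nat} (S : 'cV[R]_d -> R)
  (z : 'cV[R]_(N * d)) : R := \sum_(j < N) S (block z j).

Definition sc {R : realType} (A : 'M[R]_1) : R := A 0 0.

From HB Require Import structures.
From mathcomp Require Import all_boot all_order all_algebra.
From mathcomp Require Import all_classical all_reals all_analysis.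
From mathcomp Require Import mxtens ring.
Set Implicit Arguments.
Unset Strict Implicit.
Unset Printing Implicit Defensive.
Import Order.TTheory GRing.Theory Num.Theory.
Import numFieldNormedType.Exports.
Local Open Scope ring_scope.

(* Substituting the equation of motion for the gradient turns the local
   conservation law into an identity between bilinear forms in z and dz/dt.
   With A = I_N (x) K and C = D (x) I_d, both skew-symmetric, A C = C A = D (x) K
   is symmetric, and (D (x) M)^T C = (D^T D) (x) M^T is skew, so the quadratic
   term z^T (D (x) M)^T C z vanishes and the remaining terms cancel. *)

Section bilinear_forms.
Variable R : realType.

Lemma scD (A B : 'M[R]_1) : sc (A + B) = sc A + sc B.
Proof. by rewrite /sc mxE. Qed.

Lemma scN (A : 'M[R]_1) : sc (- A) = - sc A.
Proof. by rewrite /sc mxE. Qed.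

Lemma sc_trmx (A : 'M[R]_1) : sc A^T = sc A.
Proof. by rewrite /sc mxE. Qed.

Lemma sc_bilin_sum n (P : 'M[R]_n) (u v : 'cV[R]_n) :
  sc (u^T *m P *m v) = \sum_(i < n) \sum_(j < n) u i 0 * P i j * v j 0.
Proof.
rewrite /sc mxE exchange_big; apply: eq_bigr => j _; rewrite mxE mulr_suml.
by apply: eq_bigr => i _; rewrite mxE.
Qed.

Lemma sc_bilin_trmx n (P : 'M[R]_n) (u v : 'cV[R]_n) :
  sc (u^T *m P *m v) = sc (v^T *m P^T *m u).
Proof. by rewrite -sc_trmx !trmx_mul trmxK mulmxA. Qed.

Lemma sc_quad_skew n (P : 'M[R]_n) (u : 'cV[R]_n) :
  P^T = - P -> sc (u^T *m P *m u) = 0.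
Proof.
move=> skewP; have := sc_bilin_trmx P u u.
rewrite skewP mulmxN mulNmx scN => /eqP; rewrite -subr_eq0 opprK -mulr2n.
by rewrite -mulr_natl mulf_eq0 pnatr_eq0 => /eqP.
Qed.

End bilinear_forms.

Section kronecker.
Variable R : comPzRingType.

Lemma tensNmx m n p q (A : 'M[R]_(m, n)) (B : 'M[R]_(p, q)) :
  (- A) *t B = - (A *t B).
Proof. by apply/matrixP => i j; rewrite !mxE mulNr. Qed.

Lemma tensmxN m n p q (A : 'M[R]_(m, n)) (B : 'M[R]_(p, q)) :
  A *t (- B) = - (A *t B).
Proof. by apply/matrixP => i j; rewrite !mxE mulrN. Qed.

Lemma tensmx_skew_sym m n (A : 'M[R]_m) (B : 'M[R]_n) :
  A^T = - A -> B^T = B -> (A *t B)^T = - (A *t B).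
Proof. by move=> skewA symB; rewrite trmx_tens skewA symB tensNmx. Qed.

Lemma tensmx_sym_skew m n (A : 'M[R]_m) (B : 'M[R]_n) :
  A^T = A -> B^T = - B -> (A *t B)^T = - (A *t B).
Proof. by move=> symA skewB; rewrite trmx_tens symA skewB tensmxN. Qed.

Lemma mul_tens1mx_tensmx1 m n (A : 'M[R]_m) (B : 'M[R]_n) :
  (1%:M *t B) *m (A *t 1%:M) = A *t B.
Proof. by rewrite tensmx_mul mul1mx mulmx1. Qed.

Lemma mul_tensmx1_tens1mx m n (A : 'M[R]_m) (B : 'M[R]_n) :
  (A *t 1%:M) *m (1%:M *t B) = A *t B.
Proof. by rewrite tensmx_mul mulmx1 mul1mx. Qed.

End kronecker.

Section bilinear_derivative.
Variables (R : realType) (n : nat).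

Lemma is_derive_coord (f : R -> 'cV[R]_n) t i :
  derivable f t 1 -> is_derive t 1 (fun s => f s i 0) (derive1 f t i 0).
Proof.
move=> df; have di : derivable (fun s => f s i 0) t 1 by move/derivable_mxP: df.
by apply: DeriveDef => //; rewrite derive1E derive_mx // mxE.
Qed.

Lemma is_derive_bilin (P : 'M[R]_n) (f g : R -> 'cV[R]_n) t :
  derivable f t 1 -> derivable g t 1 ->
  is_derive t 1 (fun s => sc ((f s)^T *m P *m g s))
    (sc ((derive1 f t)^T *m P *m g t) + sc ((f t)^T *m P *m derive1 g t)).
Proof.
move=> df dg.
have entry i j : is_derive t 1 (fun s => f s i 0 * P i j * g s j 0)
    (derive1 f t i 0 * P i j * g t j 0 + f t i 0 * P i j * derive1 g t j 0).
  have dPg : is_derive t 1 (P i j \*: (fun s => g s j 0)) (P i j *: derive1 g t j 0).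
    exact/is_deriveZ/is_derive_coord.
  have := is_deriveM (is_derive_coord i df) dPg.
  have -> : (fun s => f s i 0) * (P i j \*: (fun s => g s j 0)) =
            (fun s => f s i 0 * P i j * g s j 0).
    by apply: funext => s /=; rewrite mulrA.
  by move=> dfPg; apply: is_derive_eq dfPg _;
    rewrite /GRing.scale /= -[P i j *: g t j 0]/(P i j * g t j 0); ring.
have -> : (fun s => sc ((f s)^T *m P *m g s)) =
          \sum_(i < n) \sum_(j < n) (fun s => f s i 0 * P i j * g s j 0).
  apply: funext => s; rewrite fct_sumE sc_bilin_sum.
  by apply: eq_bigr => i _; rewrite fct_sumE.
by apply: is_derive_eq; rewrite !sc_bilin_sum -big_split; apply: eq_bigr => i _; rewrite -big_split.
Qed.

End bilinear_derivative.

Section skew_conservation.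
Variables (R : realType) (n : nat) (A B C : 'M[R]_n).
Hypotheses (skewA : A^T = - A) (skewC : C^T = - C) (commAC : A *m C = C *m A)
  (skewBC : (B^T *m C)^T = - (B^T *m C)).

Lemma skew_conservation_identity (x w : 'cV[R]_n) :
  2^-1 * (sc (w^T *m (C *m A) *m x) + sc (x^T *m (C *m A) *m w))
  + (sc ((A *m w + B *m x)^T *m (C *m x))
     - 2^-1 * sc ((C *m x)^T *m A *m w)
     - 2^-1 * sc (x^T *m A *m (C *m w))) = 0.
Proof.
set q := sc (x^T *m (C *m A) *m w).
have symCA : (C *m A)^T = C *m A.
  by rewrite trmx_mul skewA skewC mulmxN mulNmx opprK.
have flip : sc (w^T *m (C *m A) *m x) = q by rewrite sc_bilin_trmx symCA.
have grad_term : sc ((A *m w + B *m x)^T *m (C *m x)) = - q.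
  rewrite raddfD /= mulmxDl scD !trmx_mul !mulmxA.
  rewrite -(mulmxA x^T) sc_quad_skew // addr0 skewA mulmxN mulNmx mulNmx scN.
  by rewrite -(mulmxA w^T) commAC flip.
have left_term : sc ((C *m x)^T *m A *m w) = - q.
  by rewrite trmx_mul skewC mulmxN !mulNmx scN -(mulmxA x^T).
have right_term : sc (x^T *m A *m (C *m w)) = q.
  by rewrite mulmxA -(mulmxA x^T) commAC.
rewrite flip grad_term left_term right_term.
by field.
Qed.

End skew_conservation.

Theorem theorem3 (R : realType) (d N : nat) (hd : (0 < d)%N) (hN : (0 < N)%N)
  (K M : 'M[R]_d) (hK : K^T = - K) (hM : M^T = - M)
  (S : 'cV[R]_d -> R) (hS : smooth S)
  (D : 'M[R]_N) (hD : D^T = - D)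
  (z : R -> 'cV[R]_(N * d))
  (hz : forall t : R, derivable z t 1)
  (hode : forall t : R,
     (1%:M *t K) *m derive1 z t + (D *t M) *m z t = grad (Stilde S) (z t)) :
  let C := D *t (1%:M : 'M[R]_d) in
  let I := fun t : R => 2^-1 * sc ((z t)^T *m (D *t K) *m z t) in
  let nablaM := fun t : R =>
      sc ((grad (Stilde S) (z t))^T *m (C *m z t))
      - 2^-1 * sc ((C *m z t)^T *m ((1%:M : 'M[R]_N) *t K) *m derive1 z t)
      - 2^-1 * sc ((z t)^T *m ((1%:M : 'M[R]_N) *t K) *m (C *m derive1 z t)) in
  forall t : R, derivable I t 1 /\ derive1 I t + nablaM t = 0.
Proof.
move=> C I nablaM t.
set A := (1%:M : 'M[R]_N) *t K.
have CA : C *m A = D *t K by apply: mul_tensmx1_tens1mx.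
have [dI dIval] : is_derive t 1 I (2^-1 *: (sc ((derive1 z t)^T *m (C *m A) *m z t)
                                 + sc ((z t)^T *m (C *m A) *m derive1 z t))).
  rewrite CA; apply/is_deriveZ/is_derive_bilin; apply: hz.
split=> //; rewrite derive1E dIval /nablaM -hode; apply: skew_conservation_identity.
- exact: tensmx_sym_skew (trmx1 _ _) hK.
- exact: tensmx_skew_sym hD (trmx1 _ _).
- by rewrite CA mul_tens1mx_tensmx1.
- rewrite trmx_tens hD hM tensNmx tensmxN opprK tensmx_mul mulmx1.
  apply: tensmx_sym_skew hM.
  by rewrite trmx_mul hD mulmxN mulNmx opprK.
Qed.
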